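(* Any two butterfly algebras are isometric and isomorphic as Lie algebras; that is, for any two butterfly algebras there is a Lie algebra isomorphism between them which is an isometry of the invariant bilinear forms.
   Context: A butterfly algebra is a real 2-step nilpotent Lie algebra $\mathfrak{b}_6$ (i.e. $[\mathfrak{b}_6,[\mathfrak{b}_6,\mathfrak{b}_6]]=0$) of dimension $6$, endowed with a symmetric bilinear form $(\cdot,\cdot)$ that is invariant, i.e. $([X,Y],Z)=-(Y,[X,Z])$ for all $X,Y,Z$, such that there exists $Z\in[\mathfrak{b}_6,\mathfrak{b}_6]$ not lying in the radical $\mathfrak{r}=\{X\in\mathfrak{b}_6\mid (X,\mathfrak{b}_6)=0\}$. *)

From HB Require Import structures.
From mathcomp Require Import all_boot all_order all_algebra.
From mathcomp Require Import reals.
Set Implicit Arguments. Unset Strict Implicit. Unset Printing Implicit Defensive.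
Import Order.TTheory GRing.Theory Num.Theory.
Local Open Scope ring_scope.

(* Z lies in the derived algebra [b,b] = linear span of all brackets [X,Y];
   since brackets are bilinear, the span is the set of finite sums of brackets. *)
Definition in_derived (R : realType) (V : vectType R) (br : V -> V -> V)
  (Z : V) : Prop :=
  exists s : seq (V * V), Z = \sum_(p <- s) br p.1 p.2.

Definition in_radical (R : realType) (V : vectType R) (B : V -> V -> R)
  (X : V) : Prop := forall Y : V, B X Y = 0.

Definition is_lie_algebra (R : realType) (V : vectType R) (br : V -> V -> V)
  : Prop :=
  [/\ (forall (a : R) (x y z : V), br (a *: x + y) z = a *: br x z + br y z),
      (forall (a : R) (x y z : V), br z (a *: x + y) = a *: br z x + br z y),
      (forall x : V, br x x = 0) &
      (forall x y z : V, br x (br y z) + br y (br z x) + br z (br x y) = 0)].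

Definition is_sym_bilinear (R : realType) (V : vectType R) (B : V -> V -> R)
  : Prop :=
  [/\ (forall (a : R) (x y z : V), B (a *: x + y) z = a * B x z + B y z),
      (forall (a : R) (x y z : V), B z (a *: x + y) = a * B z x + B z y) &
      (forall x y : V, B x y = B y x)].

Definition is_butterfly (R : realType) (V : vectType R) (br : V -> V -> V)
  (B : V -> V -> R) : Prop :=
  [/\ \dim (fullv : {vspace V}) = 6%N,
      is_lie_algebra br &
   [/\ (forall x y z : V, br x (br y z) = 0),
      is_sym_bilinear B,
      (forall x y z : V, B (br x y) z = - B y (br x z)) &
      (exists Z : V, in_derived br Z /\ ~ in_radical B Z)]].

(* A butterfly algebra has a normal form.  Since some element of the derived
   algebra is not in the radical, there are p, q, r with ([p, q], r) = 1.  The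
   form (u, v, t) |-> ([u, v], t) is alternating, so the brackets z_k of the
   other two of p, q, r are dual to the third; by 2-step nilpotency they are
   central and isotropic.  Correcting p, q, r along the z_k makes them
   isotropic too, which yields a hyperbolic basis x_i, z_i in which the form is
   the split form and the bracket is determined by ([x_i, x_j], x_k) = e_ijk,
   the Levi-Civita symbol.  The linear map matching such bases of two
   butterfly algebras is an isometric isomorphism. *)

From HB Require Import structures.
From mathcomp Require Import all_boot all_order all_algebra.
From mathcomp Require Import reals.
From mathcomp Require Import ring lra.
From Stdlib Require Import Classical.
Set Implicit Arguments. Unset Strict Implicit. Unset Printing Implicit Defensive.
Import GRing.Theory Num.Theory.
Local Open Scope ring_scope.

Section SymBilinear.
Variables (R : realType) (V : vectType R) (B : V -> V -> R).
Hypothesis symB : is_sym_bilinear B.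

Lemma Bsym x y : B x y = B y x.
Proof. by case: symB. Qed.

Lemma BDl x y z : B (x + y) z = B x z + B y z.
Proof. by case: symB => linB _ _; have := linB 1 x y z; rewrite scale1r mul1r. Qed.

Lemma B0l z : B 0 z = 0.
Proof. have := BDl 0 0 z; rewrite addr0; lra. Qed.

Lemma BZl a x z : B (a *: x) z = a * B x z.
Proof. by case: symB => linB _ _; have := linB a x 0 z; rewrite addr0 B0l addr0. Qed.

Lemma BNl x z : B (- x) z = - B x z.
Proof. by rewrite -scaleN1r BZl mulN1r. Qed.

Lemma B_suml I r (P : pred I) (F : I -> V) z :
  B (\sum_(i <- r | P i) F i) z = \sum_(i <- r | P i) B (F i) z.
Proof. exact: (big_morph (B^~ z) (fun x y => BDl x y z) (B0l z)). Qed.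

Lemma BDr x y z : B z (x + y) = B z x + B z y.
Proof. by rewrite !(Bsym z) BDl. Qed.

Lemma BZr a x z : B z (a *: x) = a * B z x.
Proof. by rewrite !(Bsym z) BZl. Qed.

Lemma BNr x z : B z (- x) = - B z x.
Proof. by rewrite !(Bsym z) BNl. Qed.

Lemma B_sumr I r (P : pred I) (F : I -> V) z :
  B z (\sum_(i <- r | P i) F i) = \sum_(i <- r | P i) B z (F i).
Proof. by rewrite Bsym B_suml; under eq_bigr do rewrite Bsym. Qed.

Section DualBasis.
Variables (m : nat) (e f : 'I_m -> V).
Hypothesis dual_ef : forall i j, B (e i) (f j) = (i == j)%:R.

Lemma dual_coord (c : 'I_m -> R) j : B (\sum_i c i *: e i) (f j) = c j.
Proof.
rewrite B_suml (bigD1 j) //= big1 => [|i /negPf neq_ij].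
  by rewrite BZl dual_ef eqxx mulr1 addr0.
by rewrite BZl dual_ef neq_ij mulr0.
Qed.

Lemma dual_expansion : \dim (fullv : {vspace V}) = m ->
  forall v, v = \sum_i B v (f i) *: e i.
Proof.
move=> dimV v; pose X := [tuple e i | i < m].
have Xi (i : 'I_m) : X`_i = e i by rewrite nth_mktuple.
have freeX : free X.
  apply/freeP=> c sum_c0 i; rewrite -(dual_coord c i).
  by under eq_bigr do rewrite -Xi; rewrite sum_c0 B0l.
have spanX : <<X>>%VS = fullv.
  apply/eqP; rewrite eqEdim subvf dimV.
  by move/eqnP: freeX => ->; rewrite size_tuple leqnn.
have /coord_span Ev : v \in <<X>>%VS by rewrite spanX memvf.
rewrite {1}Ev; apply: eq_bigr => i _; rewrite Xi; congr (_ *: _).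
by rewrite {2}Ev; under eq_bigr do rewrite Xi; rewrite dual_coord.
Qed.
End DualBasis.

Definition hyperbolic_frame n (x z : 'I_n -> V) :=
  forall i j, [/\ B (x i) (x j) = 0, B (z i) (z j) = 0 & B (x i) (z j) = (i == j)%:R].

Section HyperbolicFrame.
Variables (n : nat) (x z : 'I_n -> V).
Hypothesis frame_xz : hyperbolic_frame x z.

Lemma hyperbolic_dual_xz i j : B (x i) (z j) = (i == j)%:R.
Proof. by case: (frame_xz i j). Qed.

Lemma hyperbolic_dual_zx i j : B (z i) (x j) = (i == j)%:R.
Proof. by rewrite Bsym hyperbolic_dual_xz eq_sym. Qed.

Lemma hyperbolic_coord_z (a b : 'I_n -> R) j :
  B (\sum_i a i *: x i + \sum_i b i *: z i) (z j) = a j.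
Proof.
rewrite BDl (dual_coord hyperbolic_dual_xz).
rewrite B_suml big1 ?addr0 // => i _.
by rewrite BZl; case: (frame_xz i j) => _ -> _; rewrite mulr0.
Qed.

Lemma hyperbolic_coord_x (a b : 'I_n -> R) j :
  B (\sum_i a i *: x i + \sum_i b i *: z i) (x j) = b j.
Proof.
rewrite BDl (dual_coord hyperbolic_dual_zx).
rewrite B_suml big1 ?add0r // => i _.
by rewrite BZl; case: (frame_xz i j) => -> _ _; rewrite mulr0.
Qed.

Lemma hyperbolic_expansion : \dim (fullv : {vspace V}) = (n + n)%N ->
  forall v, v = \sum_i B v (z i) *: x i + \sum_i B v (x i) *: z i.
Proof.
move=> dimV v.
(* the concatenation of x and z is a basis, with dual basis z and x *)
pose e k := match @split n n k with inl i => x i | inr i => z i end.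
pose f k := match @split n n k with inl i => z i | inr i => x i end.
have dual_ef k l : B (e k) (f l) = (k == l)%:R.
  rewrite -(splitK k) -(splitK l) /e /f !unsplitK.
  case: (split k) => i; case: (split l) => j;
    rewrite /= ?eq_shift ?hyperbolic_dual_xz ?hyperbolic_dual_zx //;
    [by have [-> _ _] := frame_xz i j | by have [_ -> _] := frame_xz i j].
rewrite {1}(dual_expansion dual_ef dimV v) big_split_ord /=.
congr (_ + _); apply: eq_bigr => i _.
  by rewrite /e /f -[lshift n i]/(unsplit (inl i)) unsplitK.
by rewrite /e /f -[rshift n i]/(unsplit (inr i)) unsplitK.
Qed.

Lemma hyperbolic_nondegenerate : \dim (fullv : {vspace V}) = (n + n)%N ->
  forall u v, (forall t, B u t = B v t) -> u = v.
Proof.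
move=> dimV u v eq_uv.
rewrite (hyperbolic_expansion dimV u) (hyperbolic_expansion dimV v).
by congr (_ + _); apply: eq_bigr => i _; rewrite eq_uv.
Qed.

Lemma hyperbolic_form : \dim (fullv : {vspace V}) = (n + n)%N ->
  forall u v, B u v = \sum_i (B u (z i) * B v (x i) + B u (x i) * B v (z i)).
Proof.
move=> dimV u v; rewrite {1}(hyperbolic_expansion dimV u) BDl !B_suml -big_split /=.
by apply: eq_bigr => i _; rewrite !BZl (Bsym (x i)) (Bsym (z i)).
Qed.
End HyperbolicFrame.

Definition isotropize n (X z : 'I_n -> V) i :=
  X i - 2^-1 *: \sum_k B (X i) (X k) *: z k.

Lemma isotropize_frame n (X z : 'I_n -> V) :
    (forall i j, B (z i) (z j) = 0) -> (forall i j, B (X i) (z j) = (i == j)%:R) ->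
  hyperbolic_frame (isotropize X z) z.
Proof.
move=> isotropic_z dual_Xz; pose S i := \sum_k B (X i) (X k) *: z k.
have dual_zX k j : B (z k) (X j) = (k == j)%:R by rewrite Bsym dual_Xz eq_sym.
have S_z i j : B (S i) (z j) = 0.
  by rewrite B_suml big1 // => k _; rewrite BZl isotropic_z mulr0.
have S_X i j : B (S i) (X j) = B (X i) (X j) by rewrite dual_coord.
have S_S i j : B (S i) (S j) = 0.
  by rewrite B_sumr big1 // => k _; rewrite BZr S_z mulr0.
move=> i j; rewrite /isotropize -/(S i) -/(S j).
rewrite !(BDl, BNl, BZl, BDr, BNr, BZr) isotropic_z dual_Xz S_z S_S S_X.
by rewrite ![B (X i) (S j)]Bsym S_X (Bsym (X j)); split=> //; field.
Qed.
End SymBilinear.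

Definition frame_map (R : realType) (V W : vectType R) (B : V -> V -> R) n
    (x z : 'I_n -> V) (y w : 'I_n -> W) (v : V) : W :=
  \sum_i B v (z i) *: y i + \sum_i B v (x i) *: w i.

Section FrameMap.
Variables (R : realType) (V W : vectType R) (BV : V -> V -> R) (BW : W -> W -> R).
Hypotheses (symBV : is_sym_bilinear BV) (symBW : is_sym_bilinear BW).
Variables (n : nat) (x z : 'I_n -> V) (y w : 'I_n -> W).
Hypotheses (frame_xz : hyperbolic_frame BV x z) (frame_yw : hyperbolic_frame BW y w).
Hypotheses (dimV : \dim (fullv : {vspace V}) = (n + n)%N)
           (dimW : \dim (fullv : {vspace W}) = (n + n)%N).

Local Notation f := (frame_map BV x z y w).

Lemma frame_map_coord_w v i : BW (f v) (w i) = BV v (z i).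
Proof. exact: hyperbolic_coord_z. Qed.

Lemma frame_map_coord_y v i : BW (f v) (y i) = BV v (x i).
Proof. exact: hyperbolic_coord_x. Qed.

Lemma frame_map_linear a u v : f (a *: u + v) = a *: f u + f v.
Proof.
rewrite /frame_map scalerDr !scaler_sumr addrACA -!big_split /=.
apply: eq_bigr => i _.
by rewrite !BDl // !BZl // !scalerDl !scalerA addrACA.
Qed.

Lemma frame_mapK : cancel f (frame_map BW y w x z).
Proof.
move=> v; rewrite {2}(hyperbolic_expansion symBV frame_xz dimV v) /frame_map.
by congr (_ + _); apply: eq_bigr => i _; rewrite ?frame_map_coord_w ?frame_map_coord_y.
Qed.

Lemma frame_map_isometry u v : BW (f u) (f v) = BV u v.
Proof.
rewrite (hyperbolic_form symBW frame_yw dimW) (hyperbolic_form symBV frame_xz dimV).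
by apply: eq_bigr => i _; rewrite !frame_map_coord_w !frame_map_coord_y.
Qed.
End FrameMap.

Lemma frame_map_bij (R : realType) (V W : vectType R)
    (BV : V -> V -> R) (BW : W -> W -> R) n (x z : 'I_n -> V) (y w : 'I_n -> W) :
  is_sym_bilinear BV -> is_sym_bilinear BW ->
  hyperbolic_frame BV x z -> hyperbolic_frame BW y w ->
  \dim (fullv : {vspace V}) = (n + n)%N -> \dim (fullv : {vspace W}) = (n + n)%N ->
  bijective (frame_map BV x z y w).
Proof.
move=> symBV symBW frame_xz frame_yw dimV dimW.
by exists (frame_map BW y w x z); apply: frame_mapK.
Qed.

(* On distinct indices, [j = i + 1] in Z/3 exactly when (i, j, k) is a cyclic
   permutation of (0, 1, 2). *)
Definition levi_civita {R : nzRingType} (i j k : 'I_3) : R :=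
  if uniq [:: i; j; k] then (if j == i + 1 then 1 else -1) else 0.

Lemma ord3_ind (P : 'I_3 -> Prop) : P 0 -> P 1 -> P 2 -> forall i, P i.
Proof.
by move=> P0 P1 P2 [[|[|[|//]]] lt_i3]; [move: P0 | move: P1 | move: P2];
  congr P; apply/val_inj.
Qed.

Lemma levi_civita_succ (R : nzRingType) (i j : 'I_3) :
  levi_civita (j + 1) (j + 2) i = (i == j)%:R :> R.
Proof. by elim/ord3_ind: i; elim/ord3_ind: j. Qed.

Lemma alternating_ord3 (R : realFieldType) (T : Type) (phi : T -> T -> T -> R)
    (X : 'I_3 -> T) :
  (forall a b c, phi a b c = phi b c a) -> (forall a b c, phi a b c = - phi b a c) ->
  forall i j k, phi (X i) (X j) (X k) = levi_civita i j k * phi (X 0) (X 1) (X 2).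
Proof.
move=> cycle anti.
have phi_aab a b : phi a a b = 0 by have := anti a a b; lra.
have phi_aba a b : phi a b a = 0 by rewrite -cycle phi_aab.
have phi_baa a b : phi b a a = 0 by rewrite cycle phi_aab.
set c := phi (X 0) (X 1) (X 2).
have c120 : phi (X 1) (X 2) (X 0) = c by rewrite -cycle.
have c201 : phi (X 2) (X 0) (X 1) = c by rewrite -cycle c120.
have c102 : phi (X 1) (X 0) (X 2) = - c by rewrite anti.
have c021 : phi (X 0) (X 2) (X 1) = - c by rewrite anti c201.
have c210 : phi (X 2) (X 1) (X 0) = - c by rewrite anti c120.
move=> i j k; elim/ord3_ind: i; elim/ord3_ind: j; elim/ord3_ind: k;
  rewrite /levi_civita /= ?phi_aab ?phi_aba ?phi_baa ?c120 ?c201 ?c102 ?c021 ?c210;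
  by rewrite ?(mul1r, mulN1r, mul0r).
Qed.

Section Butterfly.
Variables (R : realType) (V : vectType R) (br : V -> V -> V) (B : V -> V -> R).
Hypothesis butterfly : is_butterfly br B.

Let lie_br : is_lie_algebra br. Proof. by case: butterfly. Qed.

Lemma butterfly_sym_bilinear : is_sym_bilinear B.
Proof. by case: butterfly => _ _ []. Qed.

Lemma butterfly_dim : \dim (fullv : {vspace V}) = (3 + 3)%N.
Proof. by case: butterfly. Qed.

Let symB := butterfly_sym_bilinear.

Lemma brDl x y z : br (x + y) z = br x z + br y z.
Proof. by case: lie_br => linl _ _ _; have := linl 1 x y z; rewrite !scale1r. Qed.

Lemma brDr x y z : br z (x + y) = br z x + br z y.
Proof. by case: lie_br => _ linr _ _; have := linr 1 x y z; rewrite !scale1r. Qed.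

Lemma br0l z : br 0 z = 0.
Proof.
have := brDl 0 0 z; rewrite addr0 => /(congr1 (fun t => t - br 0 z)).
by rewrite subrr addrK.
Qed.

Lemma brZl a x z : br (a *: x) z = a *: br x z.
Proof.
by case: lie_br => linl _ _ _; have := linl a x 0 z; rewrite addr0 br0l addr0.
Qed.

Lemma br_suml I r (P : pred I) (F : I -> V) v :
  br (\sum_(i <- r | P i) F i) v = \sum_(i <- r | P i) br (F i) v.
Proof. exact: (big_morph (br^~ v) (fun x y => brDl x y v) (br0l v)). Qed.

Lemma br_anticomm x y : br x y = - br y x.
Proof.
case: lie_br => _ _ alt _; apply/eqP; rewrite -addr_eq0.
by have := alt (x + y); rewrite brDl !brDr !alt add0r addr0 => ->.
Qed.

Lemma br_sumr I r (P : pred I) (F : I -> V) u :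
  br u (\sum_(i <- r | P i) F i) = \sum_(i <- r | P i) br u (F i).
Proof.
rewrite br_anticomm br_suml -sumrN; apply: eq_bigr => i _.
by rewrite br_anticomm opprK.
Qed.

Lemma brZr a x z : br z (a *: x) = a *: br z x.
Proof. by rewrite br_anticomm brZl -scalerN -br_anticomm. Qed.

Definition central c := forall v, br c v = 0.

Lemma central_br a b : central (br a b).
Proof.
by move=> v; case: butterfly => _ _ [nil _ _ _]; rewrite br_anticomm nil oppr0.
Qed.

Lemma centralN c : central c -> central (- c).
Proof. by move=> central_c v; rewrite -scaleN1r brZl central_c scaler0. Qed.

Lemma centralZ a c : central c -> central (a *: c).
Proof. by move=> central_c v; rewrite brZl central_c scaler0. Qed.

Lemma central_sum n (a : 'I_n -> R) (c : 'I_n -> V) :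
  (forall i, central (c i)) -> central (\sum_i a i *: c i).
Proof.
move=> central_c v; rewrite br_suml big1 // => i _.
by rewrite brZl central_c scaler0.
Qed.

Lemma br_addl_central u c v : central c -> br (u + c) v = br u v.
Proof. by move=> central_c; rewrite brDl central_c addr0. Qed.

Lemma br_addr_central u v c : central c -> br u (v + c) = br u v.
Proof.
by move=> central_c; rewrite br_anticomm br_addl_central -?br_anticomm ?opprK.
Qed.

Lemma Bbr_central u v c : central c -> B (br u v) c = 0.
Proof.
case: butterfly => _ _ [_ _ inv _] central_c.
by rewrite inv br_anticomm central_c oppr0 (Bsym symB) (B0l symB) oppr0.
Qed.

Lemma Bbr_cycle a b c : B (br a b) c = B (br b c) a.
Proof.
case: butterfly => _ _ [_ _ inv _].
by rewrite br_anticomm (BNl symB) inv opprK (Bsym symB).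
Qed.

Lemma Bbr_anticomm a b c : B (br a b) c = - B (br b a) c.
Proof. by rewrite br_anticomm (BNl symB). Qed.

Lemma Bbr_sum (I : finType) (X : I -> V) (a b c : I -> R) :
  B (br (\sum_i a i *: X i) (\sum_j b j *: X j)) (\sum_k c k *: X k) =
  \sum_i \sum_j \sum_k a i * b j * c k * B (br (X i) (X j)) (X k).
Proof.
rewrite br_suml (B_suml symB); apply: eq_bigr => i _.
rewrite brZl (BZl symB) br_sumr (B_suml symB) mulr_sumr; apply: eq_bigr => j _.
rewrite brZr (BZl symB) (B_sumr symB) !mulr_sumr; apply: eq_bigr => k _.
by rewrite (BZr symB) !mulrA.
Qed.

Definition butterfly_frame (x z : 'I_3 -> V) :=
  [/\ hyperbolic_frame B x z, forall i, central (z i) &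
      forall i j k, B (br (x i) (x j)) (x k) = levi_civita i j k].

Lemma butterfly_frame_form3 x z : butterfly_frame x z -> forall u v t,
  B (br u v) t =
  \sum_i \sum_j \sum_k B u (z i) * B v (z j) * B t (z k) * levi_civita i j k.
Proof.
case=> frame_xz central_z levi_x u v t.
have E := hyperbolic_expansion symB frame_xz butterfly_dim.
have central_zsum a : central (\sum_i a i *: z i) by apply: central_sum.
rewrite [u in br u _]E [v in br _ v]E [t in B _ t]E.
rewrite !(br_addl_central _ _ (central_zsum _)) !(br_addr_central _ _ (central_zsum _)).
rewrite (BDr symB) (Bbr_central _ _ (central_zsum _)) addr0 Bbr_sum.
by do 3![apply: eq_bigr => ? _]; rewrite levi_x.
Qed.

Lemma butterfly_frame_exists : exists x z, butterfly_frame x z.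
Proof.
have [p [q [r nz_pqr]]] : exists p q r, B (br p q) r != 0.
  case: butterfly => _ _ [_ _ _ [Z [[s defZ] /not_all_ex_not [r nz_Zr]]]].
  have /hasP [[p q] _ nz_pqr] : has (fun pq => B (br pq.1 pq.2) r != 0) s.
    apply/negPn/negP => /hasPn zero_s; apply: nz_Zr.
    by rewrite defZ (B_suml symB) big1_seq // => pq /zero_s /negPn /eqP.
  by exists p, q, r.
pose X (i : 'I_3) := nth 0 [:: (B (br p q) r)^-1 *: p; q; r] i.
have levi_X i j k : B (br (X i) (X j)) (X k) = levi_civita i j k.
  have := alternating_ord3 (phi := fun a b c => B (br a b) c) X
    Bbr_cycle Bbr_anticomm i j k.
  by rewrite /= => ->; rewrite brZl (BZl symB) mulVf // mulr1.
pose z j := br (X (j + 1)) (X (j + 2)).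
have dual_Xz i j : B (X i) (z j) = (i == j)%:R.
  by rewrite (Bsym symB) levi_X levi_civita_succ.
have isotropic_z i j : B (z i) (z j) = 0 by rewrite Bbr_central //; apply: central_br.
exists (isotropize B X z), z; split=> [|i|i j k]; first exact: isotropize_frame.
  exact: central_br.
have shift_central l : central (- (2^-1 *: \sum_m B (X l) (X m) *: z m)).
  by apply/centralN/centralZ/central_sum => m; apply: central_br.
rewrite /isotropize br_addl_central // br_addr_central //.
by rewrite (BDr symB) (Bbr_central _ _ (shift_central k)) addr0 levi_X.
Qed.
End Butterfly.

Section ButterflyIsomorphism.
Variables (R : realType) (V W : vectType R).
Variables (brV : V -> V -> V) (BV : V -> V -> R) (brW : W -> W -> W) (BW : W -> W -> R).
Hypotheses (butterflyV : is_butterfly brV BV) (butterflyW : is_butterfly brW BW).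
Variables (x z : 'I_3 -> V) (y w : 'I_3 -> W).
Hypotheses (frameV : butterfly_frame brV BV x z) (frameW : butterfly_frame brW BW y w).

Let symBV := butterfly_sym_bilinear butterflyV.
Let symBW := butterfly_sym_bilinear butterflyW.
Let frame_xz : hyperbolic_frame BV x z. Proof. by case: frameV. Qed.
Let frame_yw : hyperbolic_frame BW y w. Proof. by case: frameW. Qed.
Let dimV := butterfly_dim butterflyV.
Let dimW := butterfly_dim butterflyW.

Local Notation f := (frame_map BV x z y w).

Lemma frame_map_Bbr u v t : BW (brW (f u) (f v)) (f t) = BV (brV u v) t.
Proof.
rewrite (butterfly_frame_form3 butterflyW frameW).
rewrite (butterfly_frame_form3 butterflyV frameV).
by do 3![apply: eq_bigr => ? _]; rewrite !frame_map_coord_w.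
Qed.

Lemma frame_map_br u v : f (brV u v) = brW (f u) (f v).
Proof.
(* f is onto and both sides pair with every f t as (brV u v) pairs with t *)
apply: (hyperbolic_nondegenerate symBW frame_yw dimW) => t.
have /(_ t) <- := frame_mapK symBW symBV frame_yw frame_xz dimW.
by rewrite frame_map_Bbr (frame_map_isometry symBV symBW frame_xz frame_yw).
Qed.
End ButterflyIsomorphism.

Theorem corollary5p4 (R : realType) (V W : vectType R)
  (brV : V -> V -> V) (BV : V -> V -> R)
  (brW : W -> W -> W) (BW : W -> W -> R) :
  is_butterfly brV BV -> is_butterfly brW BW ->
  exists f : V -> W,
    [/\ (forall (a : R) (x y : V), f (a *: x + y) = a *: f x + f y),
        bijective f,
        (forall x y : V, f (brV x y) = brW (f x) (f y)) &
        (forall x y : V, BW (f x) (f y) = BV x y)].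
Proof.
move=> butterflyV butterflyW.
have [x [z frameV]] := butterfly_frame_exists butterflyV.
have [y [w frameW]] := butterfly_frame_exists butterflyW.
have [frame_xz _ _] := frameV; have [frame_yw _ _] := frameW.
have symBV := butterfly_sym_bilinear butterflyV.
have symBW := butterfly_sym_bilinear butterflyW.
have dimV := butterfly_dim butterflyV; have dimW := butterfly_dim butterflyW.
exists (frame_map BV x z y w); split.
- exact (frame_map_linear symBV x z y w).
- exact (frame_map_bij symBV symBW frame_xz frame_yw dimV dimW).
- exact (frame_map_br butterflyV butterflyW frameV frameW).
- exact (frame_map_isometry symBV symBW frame_xz frame_yw dimV dimW).
Qed.
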